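(* For three players whose utility functions satisfy the nonnegativity, Lipschitz and monotonicity conditions described in the context, an $\epsilon$ envy-free solution (in the discrete sense described in the context) can be found in time $O(\log^2(K/\epsilon))$.
   Context: Three players $0,1,2$ have utility functions $u_i$ on Borel subsets of $[0,1]$ satisfying: (nonnegativity) $u_i(\emptyset)=0$ and $u_i(A)>0$ for nonempty pieces (intervals of positive length); (Lipschitz) $u_i([x,y])\le K|y-x|$ for every interval $[x,y]\subseteq[0,1]$; (monotonicity) $u_i(B)\le u_i(A)$ whenever $B\subseteq A$ (e.g. $u_i$ is a measure). Let $N=\lceil K/\epsilon\rceil$. A 2-cut is an integer vector $(x_0,x_1,x_2)$ with $x_j\ge0$, $x_0+x_1+x_2=N$, cutting $[0,1]$ into pieces $[0,x_0/N]$, $[x_0/N,(x_0+x_1)/N]$, $[(x_0+x_1)/N,1]$, indexed $0,1,2$. For a cut $x$, $P_i(x)$ denotes the index of the piece of $x$ of maximum utility for player $i$; it is assumed (non-degeneracy) that this maximizer is unique. The utilities (equivalently, the choices $P_i$) are accessed via queries. Two cuts $x,y$ are adjacent if $|x_i-y_i|\le 1$ for $i=1,2$. An $\epsilon$ envy-free solution is a set $\{x^{(0)},x^{(1)},x^{(2)}\}$ of pairwise adjacent 2-cuts together with a permutation $\pi$ of $\{0,1,2\}$ such that for every player $i$ there is $j$ with $P_i(x^{(j)})=\pi(i)$. *)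

From HB Require Import structures.
From mathcomp Require Import all_boot all_order all_algebra all_fingroup.
From mathcomp Require Import all_classical all_reals all_analysis.
Set Implicit Arguments. Unset Strict Implicit. Unset Printing Implicit Defensive.
Import Order.TTheory GRing.Theory Num.Theory.
Local Open Scope classical_set_scope.
Local Open Scope ring_scope.

Record cut2 (N : nat) := Cut {
  cx : 'I_3 -> nat ;
  cx_sum : (cx ord0 + cx (inord 1) + cx (inord 2))%N = N }.

Definition cint (R : realType) (a b : R) : set R := [set t | a <= t <= b].

Definition piece_lo (R : realType) N (x : cut2 N) (j : 'I_3) : R :=
  (\sum_(k < 3 | (k < j)%N) cx x k)%:R / N%:R.
Definition piece_hi (R : realType) N (x : cut2 N) (j : 'I_3) : R :=
  if j == inord 2 then 1 else (\sum_(k < 3 | (k <= j)%N) cx x k)%:R / N%:R.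
Definition piece (R : realType) N (x : cut2 N) (j : 'I_3) : set R :=
  cint (@piece_lo R N x j) (@piece_hi R N x j).

Definition utility (R : realType) (K : R) (u : set R -> R) : Prop :=
  u set0 = 0 /\
  (forall a b : R, 0 <= a -> a < b -> b <= 1 -> 0 < u (cint a b)) /\
  (forall a b : R, 0 <= a -> a <= b -> b <= 1 -> u (cint a b) <= K * (b - a)) /\
  (forall A B : set R, measurable A -> measurable B ->
     A `<=` cint 0 1 -> B `<=` A -> u B <= u A).

(* The strict inequality encodes
   both the definition of P_i and the non-degeneracy assumption. *)
Definition choice_of (R : realType) N (u : 'I_3 -> set R -> R)
  (P : 'I_3 -> cut2 N -> 'I_3) : Prop :=
  forall (i : 'I_3) (x : cut2 N) (j : 'I_3),
    j != P i x -> u i (@piece R N x j) < u i (@piece R N x (P i x)).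

Definition adjacent N (x y : cut2 N) : Prop :=
  forall i : 'I_3, (0 < i)%N ->
    (cx x i <= cx y i + 1)%N /\ (cx y i <= cx x i + 1)%N.

Definition envy_free_solution N (P : 'I_3 -> cut2 N -> 'I_3)
  (xs : 'I_3 -> cut2 N) (pi : {perm 'I_3}) : Prop :=
  (forall j k : 'I_3, adjacent (xs j) (xs k)) /\
  (forall i : 'I_3, exists j : 'I_3, P i (xs j) = pi i).

(* Query algorithms (decision trees): a node asks the oracle for P_i(x) and
   branches on the answer; a leaf outputs three cuts and a permutation. *)
Inductive qtree (N : nat) : Type :=
| Leaf : ('I_3 -> cut2 N) -> {perm 'I_3} -> qtree N
| Query : 'I_3 -> cut2 N -> ('I_3 -> qtree N) -> qtree N.

Fixpoint depth N (t : qtree N) : nat :=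
  match t with
  | Leaf _ _ => 0
  | Query _ _ k => (maxn (depth (k ord0)) (maxn (depth (k (inord 1))) (depth (k (inord 2))))).+1
  end.

Fixpoint run N (P : 'I_3 -> cut2 N -> 'I_3) (t : qtree N)
  : ('I_3 -> cut2 N) * {perm 'I_3} :=
  match t with
  | Leaf xs pi => (xs, pi)
  | Query i x k => run P (k (P i x))
  end.

Definition gridN (R : realType) (K eps : R) : nat := `| Num.ceil (K / eps) |%N.

(* Cut the cake at [a/N] and [b/N], [0 <= a <= b <= N], rank each player's
   favourite piece in the order 1 < 2 < 0 and let [rho a b] be the median of
   the three ranks. Monotonicity of the utilities makes ranks nondecreasing in
   [a] and makes rank 0 persist as [b] grows, while positivity and the
   Lipschitz bound fix them on the boundary of the triangle: [rho 0 0 = 1] and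
   rank 1 does not occur in row [N]. Bisecting on rows gives a row [b] that
   contains rank 1 while row [b+1] does not; bisections inside these two rows
   locate the rank boundaries, next to which three pairwise adjacent cuts carry
   the median ranks 0, 1 and 2. At the cut whose median rank is that of piece
   [m], two players choose [m], which is enough for Hall's condition, so a
   permutation assigning each player a piece he chooses at one of the cuts
   exists. The outer bisection calls an inner one at each step: O(log^2 N)
   queries. *)

From HB Require Import structures.
From mathcomp Require Import all_boot all_order all_algebra all_fingroup.
From mathcomp Require Import all_classical all_reals all_analysis.
From mathcomp Require Import zify lra.
Import Order.TTheory GRing.Theory Num.Theory.
Set Implicit Arguments.
Unset Strict Implicit.
Unset Printing Implicit Defensive.

Section QueryPrograms.
Variable N : nat.

(* Algorithms are written in continuation-passing style: a program producing
   an [A] turns the rest of the algorithm, a function of that [A], into a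
   query tree. *)
Definition qprog (A : Type) := (A -> qtree N) -> qtree N.

Definition qret A (a : A) : qprog A := fun k => k a.
Definition qbind A B (p : qprog A) (f : A -> qprog B) : qprog B :=
  fun k => p (fun a => f a k).
Definition qmap A B (f : A -> B) (p : qprog A) : qprog B :=
  qbind p (fun a => qret (f a)).
Definition qask (i : 'I_3) (x : cut2 N) : qprog 'I_3 := Query i x.

Definition qcost A (p : qprog A) (d : nat) :=
  forall k m, (forall a, depth (k a) <= m) -> depth (p k) <= d + m.

Lemma qcost_ret A (a : A) : qcost (qret a) 0.
Proof. by move=> k m; apply. Qed.

Lemma qcost_ask i x : qcost (qask i x) 1.
Proof. by move=> k m Hk /=; rewrite add1n ltnS !geq_max !Hk. Qed.

Lemma qcost_bind A B (p : qprog A) (f : A -> qprog B) d1 d2 :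
  qcost p d1 -> (forall a, qcost (f a) d2) -> qcost (qbind p f) (d1 + d2).
Proof. by move=> Hp Hf k m Hk; rewrite -addnA; apply: Hp => a; apply: Hf. Qed.

Lemma qcost_map A B (f : A -> B) p d : qcost p d -> qcost (qmap f p) d.
Proof. by move=> Hp; rewrite -[d]addn0; apply: qcost_bind => // a; apply: qcost_ret. Qed.

Lemma qcost_le A (p : qprog A) d d' : d <= d' -> qcost p d -> qcost p d'.
Proof. by move=> le_dd' Hp k m /Hp /leq_trans; apply; rewrite leq_add2r. Qed.

Variable P : 'I_3 -> cut2 N -> 'I_3.

Definition qspec A (p : qprog A) (Q : A -> Prop) :=
  exists2 v, Q v & forall k, run P (p k) = run P (k v).

Lemma qspec_ret A (a : A) (Q : A -> Prop) : Q a -> qspec (qret a) Q.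
Proof. by exists a. Qed.

Lemma qspec_ask i x : qspec (qask i x) (eq^~ (P i x)).
Proof. by exists (P i x). Qed.

Lemma qspec_bind A B (p : qprog A) (f : A -> qprog B) Q Q' :
  qspec p Q -> (forall a, Q a -> qspec (f a) Q') -> qspec (qbind p f) Q'.
Proof.
move=> [v Qv Hv] /(_ v Qv) [w Q'w Hw].
by exists w => // k; rewrite /qbind Hv Hw.
Qed.

Lemma qspec_weaken A (p : qprog A) (Q Q' : A -> Prop) :
  qspec p Q -> (forall a, Q a -> Q' a) -> qspec p Q'.
Proof. by move=> [v Qv Hv] HQ; exists v; first exact: HQ. Qed.

Lemma qspec_map A B (f : A -> B) p (Q : A -> Prop) :
  qspec p Q -> qspec (qmap f p) (fun b => exists2 a, Q a & b = f a).
Proof. by move=> Hp; apply: qspec_bind Hp _ => a Qa; apply: qspec_ret; exists a. Qed.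

End QueryPrograms.

Notation "'let*' x := p 'in' q" := (qbind p (fun x => q))
  (at level 200, x name, p at level 100, q at level 200).

(* Bisection on [lo, hi) with at most [n] halvings, for a predicate queried
   by [test]; it keeps the invariant "[G lo] and not [G hi]". *)
Fixpoint bsearch N (test : nat -> qprog N bool) (n lo hi : nat) : qprog N nat :=
  if n is n'.+1 then
    if hi <= lo.+1 then qret lo else
      let* t := test ((lo + hi) %/ 2) in
      if t then bsearch test n' ((lo + hi) %/ 2) hi
      else bsearch test n' lo ((lo + hi) %/ 2)
  else qret lo.

Lemma qcost_bsearch N (test : nat -> qprog N bool) d :
  (forall m, qcost (test m) d) -> forall n lo hi, qcost (bsearch test n lo hi) (n * d).
Proof.
move=> Htest; elim=> [|n IH] lo hi /=; first exact: qcost_ret.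
case: ifP => _; first by move=> k m Hk; apply: leq_trans (Hk lo) (leq_addl _ _).
by rewrite mulSn; apply: qcost_bind => // -[].
Qed.

Lemma qspec_bsearch N P (test : nat -> qprog N bool) (G : nat -> Prop) n lo hi :
  G lo -> ~ G hi -> lo < hi -> hi - lo <= 2 ^ n ->
  (forall m, lo < m < hi -> qspec P (test m) (fun t => t = true <-> G m)) ->
  qspec P (bsearch test n lo hi) (fun r => lo <= r < hi /\ G r /\ ~ G r.+1).
Proof.
elim: n lo hi => [|n IH] lo hi Glo nGhi lt_lo_hi len Htest /=.
  rewrite expn0 in len; have ? : hi = lo.+1 by lia.
  by subst hi; apply: qspec_ret; rewrite leqnn ltnSn.
case: ifP => short.
  have ? : hi = lo.+1 by lia.
  by subst hi; apply: qspec_ret; rewrite leqnn ltnSn.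
set mid := (lo + hi) %/ 2; rewrite expnS in len.
have [lo_mid mid_hi] : lo < mid /\ mid < hi by rewrite /mid; lia.
apply: qspec_bind (Htest mid _) _; first by rewrite lo_mid.
move=> [] [Gmid midG].
- apply: qspec_weaken; first apply: (IH mid hi (Gmid erefl) nGhi).
  + lia.
  + lia.
  + by move=> m ?; apply: Htest; lia.
  by move=> r [? ?]; split => //; lia.
- have nGmid : ~ G mid by move/midG.
  apply: qspec_weaken; first apply: (IH lo mid Glo nGmid).
  + lia.
  + lia.
  + by move=> m ?; apply: Htest; lia.
  by move=> r [? ?]; split => //; lia.
Qed.

Definition o1 : 'I_3 := Ordinal (isT : 1 < 3).
Definition o2 : 'I_3 := Ordinal (isT : 2 < 3).

Lemma inord1 : inord 1 = o1. Proof. by apply: val_inj; rewrite /= inordK. Qed.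
Lemma inord2 : inord 2 = o2. Proof. by apply: val_inj; rewrite /= inordK. Qed.

Lemma ord3_cases (x : 'I_3) : [\/ x = ord0, x = o1 | x = o2].
Proof.
by case: x => -[|[|[|//]]] lt_x3; [constructor 1|constructor 2|constructor 3];
  apply: val_inj.
Qed.

Lemma existsI3 (Q : 'I_3 -> bool) : (exists m, Q m) -> [|| Q ord0, Q o1 | Q o2].
Proof. by case=> m; case: (ord3_cases m) => -> ->; rewrite ?orbT. Qed.

Definition fun3 T (x y z : T) (j : 'I_3) : T :=
  if val j == 0 then x else if val j == 1 then y else z.

Lemma fun3_inj (a b c : 'I_3) :
  a != b -> a != c -> b != c -> injective (fun3 a b c).
Proof.
move=> ab ac bc x y.
by case: (ord3_cases x) => ->; case: (ord3_cases y) => -> //;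
  rewrite /fun3 /= => E; move: ab ac bc; rewrite E ?eqxx.
Qed.

Lemma perm3_of (S : 'I_3 -> 'I_3 -> bool) (a b c : 'I_3) :
  a != b -> a != c -> b != c -> [&& S ord0 a, S o1 b & S o2 c] ->
  exists pi : {perm 'I_3}, forall i, S i (pi i).
Proof.
move=> ab ac bc /and3P[Sa Sb Sc].
by exists (perm (fun3_inj ab ac bc)) => i; rewrite permE; case: (ord3_cases i) => ->.
Qed.

(* Hall's theorem for a relation on 'I_3 x 'I_3, as a boolean tautology in the
   nine entries [sij = S i j]: the hypotheses are Hall's condition for the
   sets of one (rows), two (the pairs) and three players (columns). *)
Lemma hall3_bool (s00 s01 s02 s10 s11 s12 s20 s21 s22 : bool) :
  [|| s00, s01 | s02] -> [|| s10, s11 | s12] -> [|| s20, s21 | s22] ->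
  [|| s00, s10 | s20] -> [|| s01, s11 | s21] -> [|| s02, s12 | s22] ->
  [|| s01, s11, s02 | s12] -> [|| s01, s21, s02 | s22] -> [|| s11, s21, s12 | s22] ->
  [|| s00, s10, s02 | s12] -> [|| s00, s20, s02 | s22] -> [|| s10, s20, s12 | s22] ->
  [|| s00, s10, s01 | s11] -> [|| s00, s20, s01 | s21] -> [|| s10, s20, s11 | s21] ->
  [|| [&& s00, s11 & s22], [&& s00, s12 & s21], [&& s01, s10 & s22],
      [&& s01, s12 & s20], [&& s02, s10 & s21] | [&& s02, s11 & s20]].
Proof.
by case: s00; case: s01; case: s02; case: s10; case: s11; case: s12;
  case: s20; case: s21; case: s22.
Qed.

Section Hall3.
Variable S : 'I_3 -> 'I_3 -> bool.
Hypothesis S_row : forall i, exists m, S i m.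
Hypothesis S_col : forall m, exists i, S i m.
Hypothesis S_pair :
  forall m i i', i != i' -> exists2 k, k != m & S i k || S i' k.

Lemma pair_avoids m i i' k1 k2 : i != i' -> (forall k, k != m -> k = k1 \/ k = k2) ->
  [|| S i k1, S i' k1, S i k2 | S i' k2].
Proof.
move=> ii' other; have [k /other[] -> /orP[]->] := S_pair m ii';
by rewrite ?orbT.
Qed.

Lemma hall3 : exists pi : {perm 'I_3}, forall i, S i (pi i).
Proof.
have ne0 k : k != ord0 -> k = o1 \/ k = o2 by case: (ord3_cases k) => ->; auto.
have ne1 k : k != o1 -> k = ord0 \/ k = o2 by case: (ord3_cases k) => ->; auto.
have ne2 k : k != o2 -> k = ord0 \/ k = o1 by case: (ord3_cases k) => ->; auto.
have := hall3_bool
  (existsI3 (S_row ord0)) (existsI3 (S_row o1)) (existsI3 (S_row o2))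
  (existsI3 (S_col ord0)) (existsI3 (S_col o1)) (existsI3 (S_col o2))
  (pair_avoids (i:=ord0) (i':=o1) isT ne0) (pair_avoids (i:=ord0) (i':=o2) isT ne0)
  (pair_avoids (i:=o1) (i':=o2) isT ne0)
  (pair_avoids (i:=ord0) (i':=o1) isT ne1) (pair_avoids (i:=ord0) (i':=o2) isT ne1)
  (pair_avoids (i:=o1) (i':=o2) isT ne1)
  (pair_avoids (i:=ord0) (i':=o1) isT ne2) (pair_avoids (i:=ord0) (i':=o2) isT ne2)
  (pair_avoids (i:=o1) (i':=o2) isT ne2).
by case/or3P => [|| /orP[| /orP[| /orP[]]]] /perm3_of; apply.
Qed.
End Hall3.

(* The cut with first knife at [a] and second at [b]; the clamping only makes
   the coordinates sum to [N] for all [a] and [b]. *)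
Definition cut_coord (N a b : nat) (k : 'I_3) : nat :=
  if val k == 0 then minn a (minn b N)
  else if val k == 1 then minn b N - minn a (minn b N)
  else N - minn b N.

Lemma cut_coord_sum N a b :
  cut_coord N a b ord0 + cut_coord N a b (inord 1) + cut_coord N a b (inord 2) = N.
Proof. rewrite inord1 inord2 /cut_coord /=; lia. Qed.

Definition cut_at N a b : cut2 N := Cut (cut_coord_sum N a b).

Section CutAt.
Variables N a b : nat.
Hypothesis abN : a <= b <= N.

Lemma cut_at1 : cx (cut_at N a b) o1 = b - a.
Proof. rewrite /= /cut_coord /=; lia. Qed.
Lemma cut_at2 : cx (cut_at N a b) o2 = N - b.
Proof. rewrite /= /cut_coord /=; lia. Qed.
End CutAt.

Lemma adjacent_cut_at N a b a' b' : a <= b <= N -> a' <= b' <= N ->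
  b - a <= b' - a' + 1 -> b' - a' <= b - a + 1 -> b <= b' + 1 -> b' <= b + 1 ->
  adjacent (cut_at N a b) (cut_at N a' b').
Proof.
move=> abN abN' ? ? ? ? i; case: (ord3_cases i) => -> // _.
  by rewrite !cut_at1 //; lia.
by rewrite !cut_at2 //; lia.
Qed.

Lemma adjacent_refl N (x : cut2 N) : adjacent x x.
Proof. by move=> i _; rewrite leq_addr. Qed.

Lemma adjacent_fun3 N (x y z : cut2 N) :
  adjacent x y -> adjacent y x -> adjacent x z ->
  adjacent z x -> adjacent y z -> adjacent z y ->
  forall j k, adjacent (fun3 x y z j) (fun3 x y z k).
Proof.
move=> xy yx xz zx yz zy j k; by case: (ord3_cases j) => ->; case: (ord3_cases k) => ->;
  rewrite /fun3 /=; try apply: adjacent_refl.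
Qed.

(* Pieces are ranked 1 < 2 < 0: moving the first knife right trades piece 1
   for piece 0, so along a row a player's rank can only grow. *)
Definition piece_rank (l : 'I_3) : nat :=
  if val l == 1 then 0 else if val l == 2 then 1 else 2.

Lemma piece_rank_le2 l : piece_rank l <= 2.
Proof. by rewrite /piece_rank; case: ifP => //; case: ifP. Qed.

Lemma piece_rank_inj : injective piece_rank.
Proof. by move=> x y; case: (ord3_cases x) => ->; case: (ord3_cases y) => ->. Qed.

Definition median3 (x y z : nat) := maxn (minn x y) (minn (maxn x y) z).

Section MedianRank.
Variables (N : nat) (P : 'I_3 -> cut2 N -> 'I_3).

Definition rank_of i x := piece_rank (P i x).

Definition median_rank (x : cut2 N) :=
  median3 (rank_of ord0 x) (rank_of o1 x) (rank_of o2 x).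

Lemma median_rank_le2 x : median_rank x <= 2.
Proof.
rewrite /median_rank /median3 /rank_of.
by have := piece_rank_le2 (P ord0 x); have := piece_rank_le2 (P o1 x);
  have := piece_rank_le2 (P o2 x); lia.
Qed.

Lemma median_rank_attained x : exists i, rank_of i x = median_rank x.
Proof.
rewrite /median_rank /median3.
set r0 := rank_of ord0 x; set r1 := rank_of o1 x; set r2 := rank_of o2 x.
have : [|| maxn (minn r0 r1) (minn (maxn r0 r1) r2) == r0,
           maxn (minn r0 r1) (minn (maxn r0 r1) r2) == r1 |
           maxn (minn r0 r1) (minn (maxn r0 r1) r2) == r2] by lia.
by case/or3P => /eqP ->; eexists.
Qed.

Lemma median_rank_agree x i i' :
  i != i' -> P i x = P i' x -> median_rank x = rank_of i x.
Proof.
rewrite /median_rank /median3 /rank_of => ne E.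
by case: (ord3_cases i) ne E => ->; case: (ord3_cases i') => -> // _ ->; lia.
Qed.

(* The only properties of the choices on the triangle of cuts [cut_at N a b],
   [0 <= a <= b <= N], that the algorithm uses; [utility_regular] derives
   them from the axioms on utilities. *)
Record regular_oracle : Prop := RegularOracle {
  rank_row_mono : forall i a a' b, a <= a' <= b -> b <= N ->
    rank_of i (cut_at N a b) <= rank_of i (cut_at N a' b);
  rank_col_zero : forall i a b b', a <= b <= b' -> b' <= N ->
    rank_of i (cut_at N a b) = 0 -> rank_of i (cut_at N a b') = 0;
  rank_left_le1 : forall i b, 0 < b <= N -> rank_of i (cut_at N 0 b) <= 1;
  rank_diag_gt0 : forall i b, b <= N -> 0 < rank_of i (cut_at N b b);
  rank_top_neq1 : forall i a, a <= N -> rank_of i (cut_at N a N) != 1;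
  rank_origin : forall i, rank_of i (cut_at N 0 0) = 1 }.

Arguments rank_col_zero _ i {a b b'}.
Arguments rank_left_le1 _ i {b}.
Arguments rank_diag_gt0 _ i {b}.
Arguments rank_top_neq1 _ i {a}.

Hypothesis regP : regular_oracle.

Definition rho a b := median_rank (cut_at N a b).

Lemma rho_le2 a b : rho a b <= 2.
Proof. exact: median_rank_le2. Qed.

Lemma rho_row_mono a a' b : a <= a' <= b -> b <= N -> rho a b <= rho a' b.
Proof.
move=> aa'b bN; rewrite /rho /median_rank /median3.
have := rank_row_mono regP ord0 aa'b bN; have := rank_row_mono regP o1 aa'b bN.
by have := rank_row_mono regP o2 aa'b bN; lia.
Qed.

Lemma rho_col_zero a b b' : a <= b <= b' -> b' <= N -> rho a b = 0 -> rho a b' = 0.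
Proof.
move=> abb' b'N; rewrite /rho /median_rank /median3.
have := rank_col_zero regP ord0 abb' b'N; have := rank_col_zero regP o1 abb' b'N.
have := rank_col_zero regP o2 abb' b'N; lia.
Qed.

Lemma rho_left_le1 b : 0 < b <= N -> rho 0 b <= 1.
Proof.
move=> bN; rewrite /rho /median_rank /median3.
have := rank_left_le1 regP ord0 bN; have := rank_left_le1 regP o1 bN.
by have := rank_left_le1 regP o2 bN; lia.
Qed.

Lemma rho_diag_gt0 b : b <= N -> 0 < rho b b.
Proof.
move=> bN; rewrite /rho /median_rank /median3.
have := rank_diag_gt0 regP ord0 bN; have := rank_diag_gt0 regP o1 bN.
by have := rank_diag_gt0 regP o2 bN; lia.
Qed.

Lemma rho_top_neq1 a : a <= N -> rho a N != 1.
Proof.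
move=> aN; rewrite /rho /median_rank /median3.
have := rank_top_neq1 regP ord0 aN; have := rank_top_neq1 regP o1 aN.
by have := rank_top_neq1 regP o2 aN; lia.
Qed.

Lemma rho_origin : rho 0 0 = 1.
Proof. by rewrite /rho /median_rank !rank_origin. Qed.

End MedianRank.

Definition ask3 N A (f : 'I_3 -> qprog N A) : qprog N ('I_3 -> A) :=
  let* x := f ord0 in let* y := f o1 in qmap (fun z => fun3 x y z) (f o2).

Lemma qcost_ask3 N A (f : 'I_3 -> qprog N A) d :
  (forall k, qcost (f k) d) -> qcost (ask3 f) (3 * d).
Proof.
move=> Hf; rewrite !mulSn mul0n addn0.
by apply: qcost_bind => // x; apply: qcost_bind => // y; apply: qcost_map.
Qed.

Lemma qspec_ask3 N P A (f : 'I_3 -> qprog N A) (Q : 'I_3 -> A -> Prop) :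
  (forall k, qspec P (f k) (Q k)) -> qspec P (ask3 f) (fun g => forall k, Q k (g k)).
Proof.
move=> Hf; apply: qspec_bind (Hf ord0) _ => x Qx.
apply: qspec_bind (Hf o1) _ => y Qy.
apply: qspec_weaken (qspec_map _ (Hf o2)) _ => _ [z Qz ->] k.
by case: (ord3_cases k) => ->.
Qed.

Definition pick_perm (lab : 'I_3 -> 'I_3 -> 'I_3) : {perm 'I_3} :=
  odflt 1%g [pick pi : {perm 'I_3} | [forall i, [exists j, lab i j == pi i]]].

Lemma pick_permP lab :
  (exists pi : {perm 'I_3}, forall i, exists j, lab i j = pi i) ->
  forall i, exists j, lab i j = pick_perm lab i.
Proof.
move=> [pi0 Hpi0]; rewrite /pick_perm; case: pickP => [pi /forallP Hpi|none] /=.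
  by move=> i; have /existsP[j /eqP] := Hpi i; exists j.
case/negP: (none pi0); apply/forallP => i.
by have [j Hj] := Hpi0 i; apply/existsP; exists j; rewrite Hj.
Qed.

Section Algorithm.
Variable N : nat.

Let nsteps := (trunc_log 2 N).+1.

Lemma nsteps_ge b : b <= N -> b.+1 <= 2 ^ nsteps.
Proof. by move=> bN; apply: leq_ltn_trans (trunc_log_ltn N (isT : 1 < 2)). Qed.

Definition ask_rho a b : qprog N nat :=
  let x := cut_at N a b in
  let* l0 := qask ord0 x in let* l1 := qask o1 x in
  qmap (fun l2 => median3 (piece_rank l0) (piece_rank l1) (piece_rank l2)) (qask o2 x).

(* The first [a <= b] with [rho a b > 0], found by bisecting on
   "[a = 0] or [rho (a - 1) b = 0]". *)
Definition first_pos b : qprog N nat :=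
  bsearch (fun a => qmap (fun r => r == 0) (ask_rho a.-1 b)) nsteps 0 b.+1.

Definition row_has_one b : qprog N bool :=
  let* s := first_pos b in qmap (fun r => r == 1) (ask_rho s b).

Definition last_le1 b lo : qprog N nat :=
  bsearch (fun a => qmap (fun r => r <= 1) (ask_rho a b)) nsteps lo b.+1.

(* Three pairwise adjacent cuts of pairwise distinct median ranks in rows [b]
   and [b+1], built from the rank boundaries [p] of row [b+1] and [p'], [r] of
   row [b] (see section [Triangle]). *)
Definition triangle b p p' r : 'I_3 -> cut2 N :=
  if p' == p then fun3 (cut_at N p.-1 b) (cut_at N p b) (cut_at N p b.+1)
  else if r + 3 <= p then fun3 (cut_at N r b) (cut_at N r.+1 b) (cut_at N r.+1 b.+1)
  else fun3 (cut_at N (maxn p' (p - 2)) b) (cut_at N p.-1 b.+1) (cut_at N p b.+1).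

Definition ask_choices (xs : 'I_3 -> cut2 N) : qprog N ('I_3 -> 'I_3 -> 'I_3) :=
  ask3 (fun i => ask3 (fun j => qask i (xs j))).

Definition envy_free_alg : qprog N (('I_3 -> cut2 N) * {perm 'I_3}) :=
  let* b := bsearch row_has_one nsteps 0 N in
  let* p := first_pos b.+1 in
  let* p' := first_pos b in
  let* r := last_le1 b p' in
  let xs := triangle b p p' r in
  qmap (fun lab => (xs, pick_perm lab)) (ask_choices xs).

Lemma qcost_ask_rho a b : qcost (ask_rho a b) 3.
Proof.
by apply: qcost_bind (qcost_ask _ _) _ => l0;
  apply: qcost_bind (qcost_ask _ _) _ => l1; apply/qcost_map/qcost_ask.
Qed.

Lemma qcost_first_pos b : qcost (first_pos b) (nsteps * 3).
Proof. by apply: qcost_bsearch => a; apply/qcost_map/qcost_ask_rho. Qed.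

Lemma qcost_row_has_one b : qcost (row_has_one b) (nsteps * 3 + 3).
Proof.
by apply: qcost_bind (qcost_first_pos b) _ => s; apply/qcost_map/qcost_ask_rho.
Qed.

Lemma qcost_last_le1 b lo : qcost (last_le1 b lo) (nsteps * 3).
Proof. by apply: qcost_bsearch => a; apply/qcost_map/qcost_ask_rho. Qed.

Lemma qcost_envy_free_alg : qcost envy_free_alg (24 * nsteps ^ 2).
Proof.
set n := nsteps.
have : qcost envy_free_alg (n * (n * 3 + 3) + (n * 3 + (n * 3 + (n * 3 + 3 * (3 * 1))))).
  apply: qcost_bind (qcost_bsearch qcost_row_has_one _ _ _) _ => b.
  apply: qcost_bind (qcost_first_pos _) _ => p.
  apply: qcost_bind (qcost_first_pos _) _ => p'.
  apply: qcost_bind (qcost_last_le1 _ _) _ => r.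
  by apply/qcost_map/qcost_ask3 => i; apply: qcost_ask3 => j; apply: qcost_ask.
by apply: qcost_le; have : 1 <= n by []; nia.
Qed.

End Algorithm.

Section Correctness.
Variables (N : nat) (P : 'I_3 -> cut2 N -> 'I_3).

Definition distinct_ranks (xs : 'I_3 -> cut2 N) :=
  [/\ median_rank P (xs ord0) != median_rank P (xs o1),
      median_rank P (xs ord0) != median_rank P (xs o2) &
      median_rank P (xs o1) != median_rank P (xs o2)].

(* Each rank, i.e. each piece [m], is the median rank at some cut, where two
   players choose [m]; so every piece is chosen, and two players cannot
   choose only [m] since some cut has a median rank other than that of [m]. *)
Lemma distinct_ranks_perm xs : distinct_ranks xs ->
  exists pi : {perm 'I_3}, forall i, exists j, P i (xs j) = pi i.
Proof.
move=> [d01 d02 d12].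
have onto v : v <= 2 -> exists j, median_rank P (xs j) = v.
  have := median_rank_le2 P (xs ord0); have := median_rank_le2 P (xs o1).
  have := median_rank_le2 P (xs o2) => *.
  have : [|| median_rank P (xs ord0) == v, median_rank P (xs o1) == v
           | median_rank P (xs o2) == v] by lia.
  by case/or3P => /eqP; eexists; eassumption.
suff [pi Hpi] : exists pi : {perm 'I_3}, forall i, [exists j, P i (xs j) == pi i].
  by exists pi => i; have /existsP[j /eqP] := Hpi i; exists j.
apply: (@hall3 (fun i m => [exists j, P i (xs j) == m])).
- by move=> i; exists (P i (xs ord0)); apply/existsP; exists ord0.
- move=> m; have [j Hj] := onto _ (piece_rank_le2 m).
  have [i Hi] := median_rank_attained P (xs j); exists i; apply/existsP; exists j.
  by apply/eqP/piece_rank_inj; rewrite /rank_of in Hi; rewrite Hi Hj.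
- move=> m i i' ii'.
  have [j Hj] : exists j, median_rank P (xs j) != piece_rank m.
    have [E|] := eqVneq (median_rank P (xs ord0)) (piece_rank m); last by exists ord0.
    by exists o1; rewrite -E eq_sym.
  have [Pi|Pi_m] := eqVneq (P i (xs j)) m; last first.
    by exists (P i (xs j)) => //; apply/orP; left; apply/existsP; exists j.
  have [Pi'|Pi'_m] := eqVneq (P i' (xs j)) m.
    by move: Hj; rewrite (median_rank_agree ii' (etrans Pi (esym Pi'))) /rank_of Pi eqxx.
  by exists (P i' (xs j)) => //; apply/orP; right; apply/existsP; exists j.
Qed.

Hypothesis regP : regular_oracle P.

Local Notation rho := (rho P).

Lemma qspec_ask_rho a b : qspec P (ask_rho a b) (eq^~ (rho a b)).
Proof.
apply: qspec_bind (qspec_ask _ _ _) _ => _ ->.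
apply: qspec_bind (qspec_ask _ _ _) _ => _ ->.
by apply: qspec_weaken (qspec_map _ (qspec_ask _ _ _)) _ => _ [_ -> ->].
Qed.

Definition first_positive b s :=
  [/\ s <= b, forall a, a < s -> rho a b = 0 & 0 < rho s b].

Definition row_has_rank1 b := exists2 a, a <= b & rho a b = 1.

Lemma first_positive_rank1 b s : b <= N -> first_positive b s ->
  row_has_rank1 b -> rho s b = 1.
Proof.
move=> bN [sb zero pos] [a ab rho_a]; have sa : s <= a.
  by rewrite leqNgt; apply/negP => /zero; rewrite rho_a.
by have := rho_row_mono regP (a:=s) (a':=a) (b:=b); rewrite sa ab rho_a => /(_ isT bN); lia.
Qed.

Lemma qspec_first_pos b : b <= N -> qspec P (first_pos b) (first_positive b).
Proof.
move=> bN.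
apply: qspec_weaken (qspec_bsearch (G := fun a => a = 0 \/ rho a.-1 b = 0) _ _ _ _ _) _.
- by left.
- by case=> // /= rho0; move: (rho_diag_gt0 regP bN); rewrite rho0.
- by [].
- by rewrite subn0; apply: nsteps_ge.
- move=> a /andP[a_gt0 _].
  apply: qspec_weaken (qspec_map _ (qspec_ask_rho _ _)) _ => _ [r -> ->].
  split=> [/eqP|]; first by right.
  by case=> [a0|->]; first by move: a_gt0; rewrite a0.
move=> s [/andP[_ sb] [Gs nGs]]; split=> //.
- move=> a lt_as; case: Gs => [s0|rho0]; first by move: lt_as; rewrite s0.
  have : rho a b <= rho s.-1 b by apply: (rho_row_mono regP); lia.
  by rewrite rho0; lia.
- by rewrite lt0n; apply/negP => /eqP rho0; apply: nGs; right.
Qed.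

Lemma qspec_row_has_one b : b <= N ->
  qspec P (row_has_one b) (fun t => t = true <-> row_has_rank1 b).
Proof.
move=> bN; apply: qspec_bind (qspec_first_pos bN) _ => s Hs.
apply: qspec_weaken (qspec_map _ (qspec_ask_rho _ _)) _ => _ [r -> ->].
split=> [/eqP rho1|Hb]; first by exists s; case: Hs.
by rewrite (first_positive_rank1 bN Hs Hb).
Qed.

Hypothesis N_gt0 : 0 < N.

Lemma qspec_boundary_row :
  qspec P (bsearch (@row_has_one N) (trunc_log 2 N).+1 0 N)
    (fun b => [/\ b < N, row_has_rank1 b & ~ row_has_rank1 b.+1]).
Proof.
apply: qspec_weaken (qspec_bsearch (G := row_has_rank1) _ _ N_gt0 _ _) _.
- by exists 0; last exact: rho_origin.
- by case=> a aN; apply/eqP; apply: rho_top_neq1.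
- by rewrite subn0 ltnW // nsteps_ge.
- by move=> m /andP[_ /ltnW]; apply: qspec_row_has_one.
by move=> b [/andP[_ bN] [Gb nGb]].
Qed.

Definition last_le1_spec b lo r :=
  [/\ lo <= r <= b, rho r b <= 1 & r < b -> 1 < rho r.+1 b].

Lemma qspec_last_le1 b lo : b <= N -> lo <= b -> rho lo b <= 1 ->
  qspec P (last_le1 b lo) (last_le1_spec b lo).
Proof.
move=> bN lob rho_lo.
apply: qspec_weaken; first apply: (qspec_bsearch (G := fun a => a <= b /\ rho a b <= 1)).
- by [].
- by rewrite ltnn => -[].
- by [].
- by apply: leq_trans (leq_subr _ _) (nsteps_ge bN).
- move=> a /andP[_ ab].
  apply: qspec_weaken (qspec_map _ (qspec_ask_rho _ _)) _ => _ [r -> ->].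
  by split=> [le1|[_ ->]]; first split; lia.
move=> r [/andP[lor _] [[rb rho_r] nG]]; split=> // [|lt_rb]; first by rewrite lor.
by rewrite ltnNge; apply/negP => le1; apply: nG.
Qed.

(* Row [b] contains rank 1 and row [b+1] does not. In row [b+1] the ranks are
   0 before [p] and 2 from [p] on; in row [b] they are 0 before [p'], 1 on
   [p', r] and 2 after [r]. *)
Section Triangle.
Variables b p p' r : nat.
Hypotheses (bN : b < N) (row_b : row_has_rank1 b) (row_b1 : ~ row_has_rank1 b.+1).
Hypotheses (first_b1 : first_positive b.+1 p) (first_b : first_positive b p').
Hypothesis last_b : last_le1_spec b p' r.

Lemma rho_row_b1_tail a : p <= a <= b.+1 -> rho a b.+1 = 2.
Proof.
move=> pab; have [_ _ pos] := first_b1.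
have := rho_row_mono regP pab bN; have := rho_le2 P a b.+1.
have : rho a b.+1 != 1 by apply/eqP => rho1; apply: row_b1; exists a; lia.
lia.
Qed.

Lemma rho_row_b_middle a : p' <= a <= r -> rho a b = 1.
Proof.
move=> p'ar; have [/andP[_ rb] rho_r _] := last_b.
have := first_positive_rank1 (ltnW bN) first_b row_b.
have := rho_row_mono regP (a:=p') (a':=a) (b:=b).
have := rho_row_mono regP (a:=a) (a':=r) (b:=b); lia.
Qed.

Lemma rho_row_b_tail a : r < a <= b -> rho a b = 2.
Proof.
move=> rab; have [_ _ next] := last_b; have /next : r < b by lia.
have := rho_row_mono regP (a:=r.+1) (a':=a) (b:=b); have := rho_le2 P a b; lia.
Qed.

Lemma boundary_b1_gt0 : 0 < p.
Proof.
rewrite lt0n; apply/eqP => p0; have : 0 < b.+1 <= N by rewrite bN.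
by move/(rho_left_le1 regP); rewrite rho_row_b1_tail ?p0.
Qed.

Lemma boundary_b_le_b1 : p' <= p.
Proof.
rewrite leqNgt; apply/negP => lt_pp'; have [p'b zero_b _] := first_b.
have /zero_b rho0 : p'.-1 < p' by lia.
have /(rho_col_zero regP)/(_ bN rho0) : p'.-1 <= b <= b.+1 by lia.
by rewrite rho_row_b1_tail //; lia.
Qed.

Lemma triangle_adjacent_distinct :
  (forall j k, adjacent (triangle N b p p' r j) (triangle N b p p' r k)) /\
  distinct_ranks (triangle N b p p' r).
Proof.
have [pb zero_b1 _] := first_b1; have [p'b zero_b _] := first_b.
have [/andP[p'r rb] _ _] := last_b.
have p_gt0 := boundary_b1_gt0; have p'p := boundary_b_le_b1.
rewrite /triangle; case: eqP => [p'E|p'_ne_p].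
  have e0 : rho p.-1 b = 0 by apply: zero_b; lia.
  have e1 : rho p b = 1 by apply: rho_row_b_middle; lia.
  have e2 : rho p b.+1 = 2 by apply: rho_row_b1_tail; lia.
  split; first by apply: adjacent_fun3; apply: adjacent_cut_at; lia.
  by rewrite /distinct_ranks /fun3 /= /rho in e0 e1 e2 *; rewrite e0 e1 e2.
case: ifP => far.
  have e0 : rho r b = 1 by apply: rho_row_b_middle; lia.
  have e1 : rho r.+1 b = 2 by apply: rho_row_b_tail; lia.
  have e2 : rho r.+1 b.+1 = 0 by apply: zero_b1; lia.
  split; first by apply: adjacent_fun3; apply: adjacent_cut_at; lia.
  by rewrite /distinct_ranks /fun3 /= /rho in e0 e1 e2 *; rewrite e0 e1 e2.
have e0 : rho (maxn p' (p - 2)) b = 1 by apply: rho_row_b_middle; lia.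
have e1 : rho p.-1 b.+1 = 0 by apply: zero_b1; lia.
have e2 : rho p b.+1 = 2 by apply: rho_row_b1_tail; lia.
split; first by apply: adjacent_fun3; apply: adjacent_cut_at; lia.
by rewrite /distinct_ranks /fun3 /= /rho in e0 e1 e2 *; rewrite e0 e1 e2.
Qed.

End Triangle.

Lemma qspec_envy_free_alg :
  qspec P (@envy_free_alg N) (fun res => envy_free_solution P res.1 res.2).
Proof.
apply: qspec_bind qspec_boundary_row _ => b [bN row_b row_b1].
apply: qspec_bind (qspec_first_pos bN) _ => p first_b1.
apply: qspec_bind (qspec_first_pos (ltnW bN)) _ => p' first_b.
have rho_p' := first_positive_rank1 (ltnW bN) first_b row_b.
have [p'b _ _] := first_b.
apply: qspec_bind (qspec_last_le1 (ltnW bN) p'b _) _ => [|r last_b]; first by rewrite rho_p'.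
have [adj dist] := triangle_adjacent_distinct bN row_b row_b1 first_b1 first_b last_b.
apply: qspec_weaken (qspec_map _ (qspec_ask3 _)) _.
  by move=> i; apply: qspec_ask3 => j; apply: qspec_ask.
move=> _ [lab Hlab ->]; split=> //= i.
have [|j] := pick_permP (lab := lab) _ i; last by rewrite Hlab; exists j.
have [pi Hpi] := distinct_ranks_perm dist.
by exists pi => i'; have [j Hj] := Hpi i'; exists j; rewrite Hlab.
Qed.
End Correctness.

Definition knife_lo (a b : nat) (j : 'I_3) : nat :=
  if j == ord0 then 0 else if j == o1 then a else b.
Definition knife_hi (N a b : nat) (j : 'I_3) : nat :=
  if j == ord0 then a else if j == o1 then b else N.

Local Open Scope classical_set_scope.
Local Open Scope ring_scope.

Section Utilities.
Variables (R : realType) (N : nat).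
Hypothesis N_gt0 : (0 < N)%N.

Let frac (n : nat) : R := n%:R / N%:R.

Lemma frac_le m n : (m <= n)%N -> frac m <= frac n.
Proof. by move=> mn; rewrite ler_pM2r ?invr_gt0 ?ltr0n // ler_nat. Qed.

Lemma frac_ge0 n : 0 <= frac n.
Proof. by rewrite divr_ge0 ?ler0n. Qed.

Lemma fracN : frac N = 1.
Proof. by rewrite /frac divff // pnatr_eq0 -lt0n. Qed.

Lemma frac_le1 n : (n <= N)%N -> frac n <= 1.
Proof. by move/frac_le; rewrite fracN. Qed.

Lemma piece_cut_at a b j : (a <= b <= N)%N ->
  piece (cut_at N a b) j = cint (frac (knife_lo a b j)) (frac (knife_hi N a b j)).
Proof.
move=> abN; rewrite /piece /piece_lo /piece_hi inord2.
have sum_lo : (\sum_(k < 3 | (k < j)%N) cx (cut_at N a b) k)%N = knife_lo a b j.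
  rewrite big_mkcond !big_ord_recr big_ord0 /= /knife_lo /cut_coord.
  by case: (ord3_cases j) => -> /=; lia.
have sum_hi : j != o2 ->
    (\sum_(k < 3 | (k <= j)%N) cx (cut_at N a b) k)%N = knife_hi N a b j.
  rewrite big_mkcond !big_ord_recr big_ord0 /= /knife_hi /cut_coord.
  by case: (ord3_cases j) => -> //= _; lia.
by rewrite sum_lo; case: eqP => [->|/eqP/sum_hi ->]; rewrite // fracN.
Qed.

Lemma cint_measurable (c d : R) : measurable (cint c d).
Proof. by rewrite /cint -set_itvcc; apply: measurable_itv. Qed.

Variables (K : R) (u : 'I_3 -> set R -> R).
Hypothesis u_utility : forall i, utility K (u i).

Lemma utility_interval_mono i lo hi lo' hi' : (lo' <= lo)%N -> (hi <= hi')%N ->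
  (hi' <= N)%N -> u i (cint (frac lo) (frac hi)) <= u i (cint (frac lo') (frac hi')).
Proof.
move=> lo'lo hihi' hi'N; have [_ [_ [_ mono]]] := u_utility i.
have := frac_le lo'lo; have := frac_le hihi'; have := frac_le1 hi'N.
have := frac_ge0 lo' => *.
apply: mono; try exact: cint_measurable;
  by move=> t /andP[t1 t2]; apply/andP; split; lra.
Qed.

Lemma utility_point i n : (n <= N)%N -> u i (cint (frac n) (frac n)) <= 0.
Proof.
move=> nN; have [_ [_ [lip _]]] := u_utility i.
by have := lip _ _ (frac_ge0 n) (lexx _) (frac_le1 nN); rewrite subrr mulr0.
Qed.

Lemma utility_interval_gt0 i lo hi : (lo < hi <= N)%N ->
  0 < u i (cint (frac lo) (frac hi)).
Proof.
move=> /andP[lohi hiN]; have [_ [pos _]] := u_utility i.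
apply: pos; [exact: frac_ge0 | | exact: frac_le1].
by rewrite ltr_pM2r ?invr_gt0 ?ltr0n // ltr_nat.
Qed.

Variable P : 'I_3 -> cut2 N -> 'I_3.
Hypothesis P_choice : choice_of u P.

Lemma knife_hi_le a b j : (a <= b <= N)%N -> (knife_hi N a b j <= N)%N.
Proof. by move=> abN; rewrite /knife_hi; case: ifP => _; [|case: ifP => _]; lia. Qed.

(* If player [i] chooses [j] at [(a, b)], then moving to [(a', b')] while
   piece [j] grows and piece [k] shrinks cannot make [i] choose [k]. *)
Lemma choice_moves_away i a b a' b' j k :
  (a <= b <= N)%N -> (a' <= b' <= N)%N -> j != k -> P i (cut_at N a b) = j ->
  (knife_lo a' b' j <= knife_lo a b j)%N -> (knife_hi N a b j <= knife_hi N a' b' j)%N ->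
  (knife_lo a b k <= knife_lo a' b' k)%N -> (knife_hi N a' b' k <= knife_hi N a b k)%N ->
  P i (cut_at N a' b') != k.
Proof.
move=> abN abN' jk Px lo_j hi_j lo_k hi_k; apply/eqP => Py.
have := @P_choice i (cut_at N a b) k; have := @P_choice i (cut_at N a' b') j.
rewrite Px Py jk eq_sym jk !piece_cut_at // => /(_ isT) lt_y /(_ isT) lt_x.
have := utility_interval_mono i lo_j hi_j (knife_hi_le j abN').
have := utility_interval_mono i lo_k hi_k (knife_hi_le k abN).
lra.
Qed.

Lemma choice_not_empty i a b j k : (a <= b <= N)%N -> j != k ->
  knife_lo a b j = knife_hi N a b j -> (knife_lo a b k < knife_hi N a b k)%N ->
  P i (cut_at N a b) != j.
Proof.
move=> abN jk empty_j nonempty_k; apply/eqP => Px.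
have := @P_choice i (cut_at N a b) k.
rewrite Px eq_sym jk !piece_cut_at // empty_j => /(_ isT) lt_kj.
have := utility_point i (knife_hi_le j abN).
have : 0 < u i (cint (frac (knife_lo a b k)) (frac (knife_hi N a b k))).
  by apply: utility_interval_gt0; rewrite nonempty_k knife_hi_le.
lra.
Qed.

Lemma utility_row_mono i a a' b : (a <= a' <= b)%N -> (b <= N)%N ->
  (rank_of P i (cut_at N a b) <= rank_of P i (cut_at N a' b))%N.
Proof.
move=> aa'b bN; have abN : (a <= b <= N)%N by lia.
have a'bN : (a' <= b <= N)%N by lia.
rewrite /rank_of; case: (ord3_cases (P i (cut_at N a b))) => E; rewrite E //.
  have ne1 : P i (cut_at N a' b) != o1.
    by apply: (choice_moves_away _ _ _ E) => //; rewrite /knife_lo /knife_hi /=; lia.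
  have ne2 : P i (cut_at N a' b) != o2.
    by apply: (choice_moves_away _ _ _ E) => //; rewrite /knife_lo /knife_hi /=; lia.
  by case: (ord3_cases (P i (cut_at N a' b))) ne1 ne2 => ->.
have ne1 : P i (cut_at N a' b) != o1.
  by apply: (choice_moves_away _ _ _ E) => //; rewrite /knife_lo /knife_hi /=; lia.
by case: (ord3_cases (P i (cut_at N a' b))) ne1 => ->.
Qed.

Lemma utility_col_zero i a b b' : (a <= b <= b')%N -> (b' <= N)%N ->
  rank_of P i (cut_at N a b) = 0%N -> rank_of P i (cut_at N a b') = 0%N.
Proof.
move=> abb' b'N; have abN : (a <= b <= N)%N by lia.
have ab'N : (a <= b' <= N)%N by lia.
rewrite /rank_of; case: (ord3_cases (P i (cut_at N a b))) => E; rewrite E // => _.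
have ne0 : P i (cut_at N a b') != ord0.
  by apply: (choice_moves_away _ _ _ E) => //; rewrite /knife_lo /knife_hi /=; lia.
have ne2 : P i (cut_at N a b') != o2.
  by apply: (choice_moves_away _ _ _ E) => //; rewrite /knife_lo /knife_hi /=; lia.
by case: (ord3_cases (P i (cut_at N a b'))) ne0 ne2 => ->.
Qed.

Lemma utility_left_le1 i b : (0 < b <= N)%N -> (rank_of P i (cut_at N 0 b) <= 1)%N.
Proof.
move=> bN; have ne0 : P i (cut_at N 0 b) != ord0.
  by apply: (choice_not_empty i (k := o1)); rewrite /knife_lo /knife_hi //=; lia.
by rewrite /rank_of; case: (ord3_cases (P i (cut_at N 0 b))) ne0 => ->.
Qed.

Lemma utility_diag_gt0 i b : (b <= N)%N -> (0 < rank_of P i (cut_at N b b))%N.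
Proof.
move=> bN; have ne1 : P i (cut_at N b b) != o1.
  have [->|b_gt0] := posnP b.
    by apply: (choice_not_empty i (k := o2)); rewrite /knife_lo /knife_hi //=; lia.
  by apply: (choice_not_empty i (k := ord0)); rewrite /knife_lo /knife_hi //=; lia.
by rewrite /rank_of; case: (ord3_cases (P i (cut_at N b b))) ne1 => ->.
Qed.

Lemma utility_top_neq1 i a : (a <= N)%N -> rank_of P i (cut_at N a N) != 1%N.
Proof.
move=> aN; have ne2 : P i (cut_at N a N) != o2.
  have [->|a_gt0] := posnP a.
    by apply: (choice_not_empty i (k := o1)); rewrite /knife_lo /knife_hi //=; lia.
  by apply: (choice_not_empty i (k := ord0)); rewrite /knife_lo /knife_hi //=; lia.
by rewrite /rank_of; case: (ord3_cases (P i (cut_at N a N))) ne2 => ->.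
Qed.

Lemma utility_origin i : rank_of P i (cut_at N 0 0) = 1%N.
Proof.
have ne0 : P i (cut_at N 0 0) != ord0.
  by apply: (choice_not_empty i (k := o2)); rewrite /knife_lo /knife_hi //=; lia.
have ne1 : P i (cut_at N 0 0) != o1.
  by apply: (choice_not_empty i (k := o2)); rewrite /knife_lo /knife_hi //=; lia.
by rewrite /rank_of; case: (ord3_cases (P i (cut_at N 0 0))) ne0 ne1 => ->.
Qed.

Lemma utility_regular : regular_oracle P.
Proof.
split; [exact: utility_row_mono | exact: utility_col_zero | exact: utility_left_le1
  | exact: utility_diag_gt0 | exact: utility_top_neq1 | exact: utility_origin].
Qed.
End Utilities.

Theorem theorem5 :
  exists C : nat, forall (R : realType) (K eps : R), 0 < K -> 0 < eps ->
    exists t : qtree (gridN K eps),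
      (depth t <= C * (trunc_log 2 (gridN K eps)).+1 ^ 2)%N /\
      forall (u : 'I_3 -> set R -> R) (P : 'I_3 -> cut2 (gridN K eps) -> 'I_3),
        (forall i, utility K (u i)) ->
        choice_of u P ->
        envy_free_solution P (run P t).1 (run P t).2.
Proof.
exists 24 => R K eps K_gt0 eps_gt0; set N := gridN K eps.
have N_gt0 : (0 < N)%N by rewrite absz_gt0 gt_eqF // ceil_gt0 // divr_gt0.
pose leaf (res : ('I_3 -> cut2 N) * {perm 'I_3}) := Leaf res.1 res.2.
exists (envy_free_alg leaf); split.
  by rewrite -[X in (_ <= X)%N]addn0; apply: qcost_envy_free_alg.
move=> u P u_utility P_choice.
have regP := utility_regular N_gt0 u_utility P_choice.
by have [res ok ->] := qspec_envy_free_alg regP N_gt0.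
Qed.
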